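(* Let $b<1$, $\delta\in(0,1)$, $\rho\in(\max\{0,b\},1)$, $R>0$, $R_0>0$, $\kappa\in(0,1)$ and $t\ge0$. Then $$\Big(1-\frac{\kappa}{R}+\xi\Big)^{1-\rho}\Big(1-\Big(\frac{R_0}{R}\Big)^{\delta}\frac{e^{-\delta t}}{\big(1-\frac{\kappa}{R}+\xi\big)^{\delta}}\Big)\ge\Big(1-\Big(\frac{R_0}{R}\Big)^{\delta}e^{-\delta t}\Big)-\Big|\xi-\frac{\kappa}{R}\Big|$$ holds for every $\xi\in\big[\frac{R_0}{R}e^{-t}-1+\frac{\kappa}{R},\frac{\kappa}{R}\big]$. *)

From Stdlib Require Export Reals.

(* Put y := 1 - kappa/R + xi, so that |xi - kappa/R| = 1 - y and the interval for xi says
   a <= y <= 1 with a := (R0/R) e^{-t}; the constant (R0/R)^delta e^{-delta t} is c := a^delta.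
   Since y <= 1, raising y to any exponent at most 1 can only increase it; hence
   y^(1-rho) >= y and y^delta >= max(y, c), and therefore
   y^(1-rho) (1 - c / y^delta) >= y (1 - c / y^delta) >= y - c. *)
From Stdlib Require Import Lra Psatz.
Open Scope R_scope.

Lemma Rpower_ge_base (x e : R) : 0 < x <= 1 -> e <= 1 -> x <= Rpower x e.
Proof.
  intros [hx0 hx1] he.
  assert (hln : ln x <= 0).
  { destruct hx1 as [hlt | ->].
    - rewrite <- ln_1; left; now apply ln_increasing.
    - rewrite ln_1; lra. }
  unfold Rpower; rewrite <- (exp_ln x) at 1 by lra.
  assert (hexp : ln x <= e * ln x) by nra.
  destruct (Rle_lt_or_eq_dec _ _ hexp) as [hlt | <-]; [| lra].
  left; now apply exp_increasing.
Qed.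

Lemma Rpower_mult_exp (s u d : R) :
  0 < s -> Rpower (s * exp u) d = Rpower s d * exp (d * u).
Proof.
  intros hs.
  rewrite <- Rpower_mult_distr by (exact hs || apply exp_pos).
  unfold Rpower at 2; now rewrite ln_exp.
Qed.

Lemma le_mul_one_sub_div (y p q c : R) :
  0 < y -> y <= p -> y <= q -> 0 <= c <= q -> y - c <= p * (1 - c / q).
Proof.
  intros hy hp hq hc.
  set (r := c / q).
  assert (hcr : c = r * q) by (unfold r; field; lra).
  assert (hr : 0 <= r <= 1) by (rewrite hcr in hc; nra).
  rewrite hcr; nra.
Qed.

Theorem lemma2p19 (b delta rho Rr R0 kappa t : R)
  (hb : b < 1) (hdelta : 0 < delta < 1)
  (hrho : Rmax 0 b < rho < 1) (hR : 0 < Rr) (hR0 : 0 < R0)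
  (hkappa : 0 < kappa < 1) (ht : 0 <= t) :
  forall xi : R,
    R0 / Rr * exp (- t) - 1 + kappa / Rr <= xi <= kappa / Rr ->
    Rpower (1 - kappa / Rr + xi) (1 - rho) *
      (1 - Rpower (R0 / Rr) delta * exp (- delta * t)
             / Rpower (1 - kappa / Rr + xi) delta)
    >= (1 - Rpower (R0 / Rr) delta * exp (- delta * t)) - Rabs (xi - kappa / Rr).
Proof.
  intros xi hxi.
  assert (hrho0 : 0 < rho) by (pose proof (Rmax_l 0 b); lra).
  assert (hs : 0 < R0 / Rr) by (apply Rdiv_lt_0_compat; lra).
  set (a := R0 / Rr * exp (- t)) in hxi.
  assert (ha : 0 < a) by (apply Rmult_lt_0_compat; [exact hs | apply exp_pos]).
  set (y := 1 - kappa / Rr + xi).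
  assert (hy : a <= y <= 1) by (unfold y; lra).
  rewrite Rabs_left1 by lra.
  replace (- delta * t) with (delta * - t) by ring.
  rewrite <- Rpower_mult_exp by exact hs; fold a.
  apply Rle_ge.
  replace (1 - Rpower a delta - - (xi - kappa / Rr)) with (y - Rpower a delta)
    by (unfold y; ring).
  apply le_mul_one_sub_div.
  - lra.
  - apply Rpower_ge_base; lra.
  - apply Rpower_ge_base; lra.
  - split; [left; apply exp_pos | apply Rle_Rpower_l; lra].
Qed.
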